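(* The edge-coloring of a complete $k$-edge-colored permutation graph is a Gallai coloring with $k$ colors, i.e., it contains no rainbow triangle.
   Context: A complete $k$-edge-colored graph $G=(V,E_1,\dots,E_k)$ is the complete graph on a finite set $V$ with edges partitioned into $k$ nonempty color classes $E_i$; $G_{|i}=(V,E_i)$. A labeling is a bijection $\ell:V\to\{1,\dots,|V|\}$. A graph $(V,E)$ with labeling $\ell$ is a simple permutation graph of a permutation $\pi$ if for all $u,v$ with $\ell(u)>\ell(v)$: $\{u,v\}\in E$ iff $\pi^{-1}(\ell(u))<\pi^{-1}(\ell(v))$. $G$ is a complete $k$-edge-colored permutation graph if there exist a labeling $\ell$ and permutations $\pi_1,\dots,\pi_k$ with $(G_{|i},\ell)$ a simple permutation graph of $\pi_i$ for all $i$. A rainbow triangle is a set of three vertices whose three edges have pairwise distinct colors; a Gallai coloring of a complete graph with $k$ colors is an edge-coloring with $k$ colors containing no rainbow triangle. *)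

From mathcomp Require Import all_boot all_order all_fingroup.
Set Implicit Arguments. Unset Strict Implicit. Unset Printing Implicit Defensive.

(* A complete k-edge-colored graph on a finite vertex type V: a coloring
   c of the unordered pairs {u,v} (u <> v) by colors in 'I_k; c is required
   to be symmetric on distinct vertices (its value on the diagonal is
   irrelevant) and every color class E_i must be nonempty. *)
Definition complete_k_edge_colored (V : finType) (k : nat) (c : V -> V -> 'I_k) : Prop :=
  (forall u v : V, u != v -> c u v = c v u) /\
  (forall i : 'I_k, exists u v : V, u != v /\ c u v = i).

Definition color_class (V : finType) (k : nat) (c : V -> V -> 'I_k) (i : 'I_k) (u v : V) : bool :=
  (u != v) && (c u v == i).

(* Labels and permutations are 0-based: 'I_#|V| = {0,..,|V|-1} instead of
   {1,..,|V|}; this order-preserving shift does not affect the definition. *)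
Definition simple_perm_graph (V : finType) (E : V -> V -> bool)
    (l : V -> 'I_#|V|) (pi : {perm 'I_#|V|}) : Prop :=
  forall u v : V, l v < l u -> (E u v <-> (pi^-1)%g (l u) < (pi^-1)%g (l v)).

Definition complete_k_edge_colored_perm_graph (V : finType) (k : nat)
    (c : V -> V -> 'I_k) : Prop :=
  complete_k_edge_colored c /\
  exists (l : V -> 'I_#|V|) (pis : 'I_k -> {perm 'I_#|V|}),
    bijective l /\ forall i : 'I_k, simple_perm_graph (color_class c i) l (pis i).

Definition rainbow_triangle (V : finType) (k : nat) (c : V -> V -> 'I_k) (x y z : V) : Prop :=
  [/\ x != y, y != z, x != z &
      [/\ c x y != c y z, c x y != c x z & c y z != c x z]].

Definition gallai_coloring (V : finType) (k : nat) (c : V -> V -> 'I_k) : Prop :=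
  forall x y z : V, ~ rainbow_triangle c x y z.

From mathcomp Require Import all_boot all_order all_fingroup.

Set Implicit Arguments.
Unset Strict Implicit.
Unset Printing Implicit Defensive.

(* In a simple permutation graph of pi, a pair of labels a < b is an edge iff
   pi^-1 inverts it; non-inversions are transitive, so if a < b < c and
   neither {a, b} nor {b, c} is an edge, then {a, c} is no edge either.
   Given a triangle p, q, r with increasing labels, apply this to the color
   class of the long edge {p, r}: that color must reappear on {p, q} or
   {q, r}, so the triangle is not rainbow. Every triangle can be listed with
   increasing labels since the labeling is injective. *)

Lemma exists_sorted_triple (T : Type) (f : T -> nat) (P : T -> T -> T -> Prop) :
    (forall x y z, P x y z -> P y x z) -> (forall x y z, P x y z -> P x z y) ->
  forall x y z, P x y z -> f x != f y -> f y != f z -> f x != f z ->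
  exists p q r, [/\ P p q r, f p < f q & f q < f r].
Proof.
move=> P_swap12 P_swap23 x y z Pxyz.
case: (ltngtP (f x) (f y)) => // fxy _; case: (ltngtP (f y) (f z)) => // fyz _.
- by exists x, y, z.
- case: (ltngtP (f x) (f z)) => // fxz _.
  + by exists x, z, y; split; first exact: P_swap23.
  + by exists z, x, y; split; first exact/P_swap12/P_swap23.
- case: (ltngtP (f x) (f z)) => // fxz _.
  + by exists y, x, z; split; first exact: P_swap12.
  + by exists y, z, x; split; first exact/P_swap23/P_swap12.
- by exists z, y, x; split; first exact/P_swap12/P_swap23/P_swap12.
Qed.

Lemma simple_perm_graph_nonedge_trans (V : finType) (E : V -> V -> bool)
    (l : V -> 'I_#|V|) (pi : {perm 'I_#|V|}) (p q r : V) :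
    simple_perm_graph E l pi -> l p < l q -> l q < l r ->
  ~~ E q p -> ~~ E r q -> ~~ E r p.
Proof.
move=> Epi lpq lqr /negP Eqp /negP Erq; apply/negP => /(Epi _ _ (ltn_trans lpq lqr)).
have sigma_pq : (pi^-1)%g (l p) <= (pi^-1)%g (l q).
  by rewrite leqNgt; apply/negP => /(Epi _ _ lpq).
have sigma_qr : (pi^-1)%g (l q) <= (pi^-1)%g (l r).
  by rewrite leqNgt; apply/negP => /(Epi _ _ lqr).
by apply/negP; rewrite -leqNgt (leq_trans sigma_pq sigma_qr).
Qed.

Section PermutationColoring.

Variables (V : finType) (k : nat) (c : V -> V -> 'I_k).
Hypothesis c_sym : forall u v : V, u != v -> c u v = c v u.

Lemma rainbow_triangle_swap12 (x y z : V) :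
  rainbow_triangle c x y z -> rainbow_triangle c y x z.
Proof.
case=> xy yz xz [cxy_yz cxy_xz cyz_xz].
rewrite /rainbow_triangle -(c_sym xy).
by split; [..|split]; rewrite // eq_sym.
Qed.

Lemma rainbow_triangle_swap23 (x y z : V) :
  rainbow_triangle c x y z -> rainbow_triangle c x z y.
Proof.
case=> xy yz xz [cxy_yz cxy_xz cyz_xz].
rewrite /rainbow_triangle -(c_sym yz).
by split; [..|split]; rewrite // eq_sym.
Qed.

Variables (l : V -> 'I_#|V|) (pis : 'I_k -> {perm 'I_#|V|}).
Hypothesis c_perm : forall i, simple_perm_graph (color_class c i) l (pis i).

Lemma long_edge_color_repeats (p q r : V) :
  l p < l q -> l q < l r -> (c p r == c p q) || (c p r == c q r).
Proof.
move=> lpq lqr.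
have colored u v : l u < l v -> color_class c (c p r) v u = (c u v == c p r).
  move=> luv; have vu : v != u by apply: contraTneq luv => ->; rewrite ltnn.
  by rewrite /color_class vu c_sym.
have : color_class c (c p r) r p by rewrite colored ?(ltn_trans lpq lqr).
apply: contraLR; rewrite negb_or => /andP[cpr_pq cpr_qr].
by apply: (simple_perm_graph_nonedge_trans (c_perm (c p r)) lpq lqr);
  rewrite colored // eq_sym.
Qed.

End PermutationColoring.

Theorem corollary6p1 (V : finType) (k : nat) (c : V -> V -> 'I_k) :
  complete_k_edge_colored_perm_graph c -> gallai_coloring c.
Proof.
case=> [[c_sym _] [l [pis [/bij_inj l_inj c_perm]]]] x y z rainbow_xyz.
have label_neq u v : u != v -> (l u : nat) != l v.
  by apply: contra => /eqP/val_inj/l_inj->.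
have [xy yz xz _] := rainbow_xyz.
have [p [q [r [[_ _ _ [_ cpq_pr cqr_pr]] lpq lqr]]]] :=
  exists_sorted_triple (f := fun u => l u : nat) (rainbow_triangle_swap12 c_sym)
    (rainbow_triangle_swap23 c_sym) rainbow_xyz
    (label_neq _ _ xy) (label_neq _ _ yz) (label_neq _ _ xz).
have := long_edge_color_repeats c_sym c_perm lpq lqr.
by rewrite ![c p r == _]eq_sym (negbTE cpq_pr) (negbTE cqr_pr).
Qed.
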